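(* Let $E$ be a finite dimensional Banach space and let $(C_n)_{n=1}^{\infty}$ be a nested sequence ($C_{n+1}\subseteq C_n$) of closed convex subsets of $E$ such that $\bigcap_{n=1}^{\infty}C_n=\{p\}$ for some point $p\in E$. Then $diam(C_n)\to 0$ as $n\to\infty$.
   Context: Diameters are taken with respect to the norm of $E$ (and may be infinite). *)

From HB Require Import structures.
From mathcomp Require Import all_boot all_order all_algebra.
From mathcomp Require Import all_classical all_reals all_analysis.
Set Implicit Arguments. Unset Strict Implicit. Unset Printing Implicit Defensive.
Import Order.TTheory GRing.Theory Num.Theory.
Import numFieldNormedType.Exports.
Local Open Scope classical_set_scope.
Local Open Scope ring_scope.

Definition finite_dimensional (R : realType) (E : normedModType R) : Prop :=
  exists s : seq E, forall x : E,
    exists c : 'I_(size s) -> R, x = \sum_(i < size s) c i *: s`_i.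

Definition diam (R : realType) (E : normedModType R) (A : set E) : \bar R :=
  ereal_sup [set (`|x - y|)%:E | x in A & y in A].

(* Every closed ball about p, of radius e > 0, eventually contains C n, so that
   diam (C n) <= 2 e.  Otherwise, for some e > 0, every C n contains a point
   farther than e from p, hence by convexity a point of the sphere S of radius
   e about p.  In finite dimension S is compact (coordinates with respect to a
   linearly independent spanning family are bounded by a multiple of the
   norm), so the nested nonempty closed sets C n `&` S have a common point: it
   lies in \bigcap_n C n = [set p], yet its distance to p is e. *)

From HB Require Import structures.
From mathcomp Require Import all_boot all_order all_algebra.
From mathcomp Require Import all_classical all_reals all_analysis.
Set Implicit Arguments. Unset Strict Implicit. Unset Printing Implicit Defensive.
Import Order.TTheory GRing.Theory Num.Theory.
Import numFieldNormedType.Exports.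
Local Open Scope classical_set_scope.
Local Open Scope ring_scope.

Lemma closed_sphere (R : realFieldType) (V : normedModType R) (p : V) (d : R) :
  closed [set x | `|x - p| = d].
Proof.
rewrite -[X in closed X]/((fun x => `|x - p|) @^-1` [set r | r = d]).
apply: (@preimage_closed _ R (fun x : V => `|x - p|)); last exact: closed_eq.
move=> x _; have sub_p : {for x, continuous (fun y : V => y - p)}.
  by apply: continuousB; [exact: cvg_id | exact: cvg_cst].
exact: (continuous_comp sub_p (@norm_continuous _ _ _)).
Qed.

Section FiniteDimensional.
Context {R : realType} {E : normedModType R}.

Definition lincomb k (b : 'I_k -> E) (c : 'rV[R]_k) : E :=
  \sum_i c ord0 i *: b i.

Fact lincomb_is_linear k (b : 'I_k -> E) : linear (lincomb b).
Proof.
move=> a u v; rewrite /lincomb scaler_sumr -big_split /=.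
by apply: eq_bigr => i _; rewrite !mxE scalerDl scalerA.
Qed.

HB.instance Definition _ k (b : 'I_k -> E) :=
  GRing.isLinear.Build R 'rV[R]_k E *:%R (lincomb b) (lincomb_is_linear b).

Definition lin_indep k (b : 'I_k -> E) := forall c, lincomb b c = 0 -> c = 0.

Lemma lincomb_continuous k (b : 'I_k -> E) : continuous (lincomb b).
Proof.
have -> : lincomb b = \sum_i (fun c : 'rV[R]_k => c ord0 i *: b i).
  by apply/funext => c; rewrite fct_sumE.
apply: (big_ind (fun f : 'rV[R]_k -> E => continuous f)).
- by move=> x; exact: cst_continuous.
- by move=> f g cf cg x; exact: (continuousD (cf x) (cg x)).
- by move=> i _ x; apply: continuousZr_tmp; exact: coord_continuous.
Qed.

Definition cons_family k (x : E) (b : 'I_k -> E) : 'I_k.+1 -> E :=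
  fun i => if unlift ord0 i is Some j then b j else x.

Lemma lincomb_cons k x (b : 'I_k -> E) c :
  lincomb (cons_family x b) c =
  c ord0 ord0 *: x + lincomb b (\row_j c ord0 (lift ord0 j)).
Proof.
rewrite /lincomb big_ord_recl /cons_family unlift_none; congr (_ + _).
by apply: eq_bigr => i _; rewrite liftK mxE.
Qed.

Lemma lin_indep_cons k x (b : 'I_k -> E) :
  lin_indep b -> ~ range (lincomb b) x -> lin_indep (cons_family x b).
Proof.
move=> indep_b xNspan c; rewrite lincomb_cons => c_ker.
have c00 : c ord0 ord0 = 0.
  apply: contra_notP xNspan => /eqP c00_neq0.
  exists (- (c ord0 ord0)^-1 *: \row_j c ord0 (lift ord0 j)) => //.
  rewrite linearZ /=; apply: (@scalerI _ _ (c ord0 ord0)) => //.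
  rewrite scalerA mulrN mulfV // scaleN1r.
  by apply/eqP; rewrite eq_sym -addr_eq0 c_ker.
move: c_ker; rewrite c00 scale0r add0r => /indep_b /rowP c_tail0.
apply/rowP => i; rewrite mxE; case: (unliftP ord0 i) => [j ->|->] //.
by have := c_tail0 j; rewrite !mxE.
Qed.

Lemma exists_lin_indep_spanning (s : seq E) : exists k (b : 'I_k -> E),
  lin_indep b /\ {subset s <= range (lincomb b)}.
Proof.
elim: s => [|x s [k [b [indep_b s_span]]]].
  by exists 0, (fun=> 0); split=> // c _; apply/rowP => -[].
have [x_span|xNspan] := pselect (range (lincomb b) x).
  exists k, b; split=> // y; rewrite in_cons => /orP[/eqP ->|/s_span //].
  exact: mem_set.
exists k.+1, (cons_family x b); split; first exact: lin_indep_cons.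
move=> y; rewrite in_cons inE => /orP[/eqP ->|/s_span /set_mem [d _ <-]].
  exists (\row_i (i == ord0)%:R) => //.
  rewrite lincomb_cons mxE eqxx scale1r.
  rewrite [X in _ + lincomb _ X](_ : _ = 0) ?linear0 ?addr0 //.
  by apply/rowP => j; rewrite !mxE.
exists (\row_i (if unlift ord0 i is Some j then d ord0 j else 0)) => //.
rewrite lincomb_cons mxE unlift_none scale0r add0r; congr lincomb.
by apply/rowP => j; rewrite !mxE liftK.
Qed.

Lemma finite_dimensional_basis : finite_dimensional E ->
  exists k (b : 'I_k -> E), lin_indep b /\ range (lincomb b) = setT.
Proof.
move=> [s s_span]; have [k [b [indep_b s_sub]]] := exists_lin_indep_spanning s.
exists k, b; split=> //; apply/seteqP; split=> // x _; have [c ->] := s_span x.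
apply: (big_ind (range (lincomb b))).
- by exists 0; rewrite ?linear0.
- by move=> _ _ [d1 _ <-] [d2 _ <-]; exists (d1 + d2); rewrite ?linearD.
- move=> i _; have /set_mem [d _ <-] := s_sub _ (mem_nth 0 (ltn_ord i)).
  by exists (c i *: d); rewrite ?linearZ.
Qed.

Lemma lincomb_lower_bound k (b : 'I_k -> E) : lin_indep b ->
  exists2 m, 0 < m & forall c, m * `|c| <= `|lincomb b c|.
Proof.
(* m is the minimum of `|lincomb b| on the compact unit sphere of 'rV_k. *)
move=> indep_b; pose S := [set c : 'rV[R]_k | `|c - 0| = 1].
have normalize_in_S c : c != 0 -> S (`|c|^-1 *: c).
  by move=> c0; rewrite /S /= subr0 normrZ normfV normr_id mulVf ?normr_eq0.
have [[c1 S_c1]|S0] := pselect (S !=set0); last first.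
  exists 1 => // c; have [->|/normalize_in_S S_c] := eqVneq c 0.
    by rewrite normr0 mulr0.
  by case: S0; exists (`|c|^-1 *: c).
have S_compact : compact S.
  apply: bounded_closed_compact; last exact: closed_sphere.
  exists 1; split=> // M M1 c; rewrite /S /= subr0 => ->; exact: ltW.
have norm_lincomb_cont : continuous (fun c => `|lincomb b c|).
  move=> c; apply: continuous_comp; first exact: lincomb_continuous.
  exact: norm_continuous.
have [c0 /set_mem S_c0 c0_min] := compact_EVT_min (ex_intro _ c1 S_c1) S_compact
  (continuous_subspaceT norm_lincomb_cont).
exists `|lincomb b c0|.
  rewrite normr_gt0; apply: contraPneq S_c0 => /indep_b ->.
  by rewrite /S /= subr0 normr0 => /esym/eqP; rewrite oner_eq0.
move=> c; have [->|c_neq0] := eqVneq c 0; first by rewrite normr0 mulr0.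
have c_gt0 : 0 < `|c| by rewrite normr_gt0.
have := c0_min _ (mem_set (normalize_in_S _ c_neq0)).
by rewrite linearZ normrZ normfV normr_id ler_pdivlMl // mulrC.
Qed.

Lemma finite_dimensional_bounded_closed_compact (A : set E) :
  finite_dimensional E -> bounded_set A -> closed A -> compact A.
Proof.
move=> /finite_dimensional_basis[k [b [indep_b b_span]]] [M [_ A_bound]].
move=> A_closed.
have {}A_bound x : A x -> `|x| <= M + 1 by apply: A_bound; rewrite ltrDl.
have [m m_gt0 b_lower] := lincomb_lower_bound indep_b.
rewrite -(image_preimage A b_span); apply: continuous_compact.
  exact/continuous_subspaceT/lincomb_continuous.
apply: bounded_closed_compact; last first.
  by apply: (proj1 (continuous_closedP _)) => //; exact: lincomb_continuous.
exists ((M + 1) / m); split; first exact: num_real.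
move=> N MN c /A_bound c_bound /=; apply/ltW/(le_lt_trans _ MN).
by rewrite ler_pdivlMr // mulrC (le_trans (b_lower c)).
Qed.

End FiniteDimensional.

Lemma nested_subset (T : Type) (C : nat -> set T) :
  (forall n, C n.+1 `<=` C n) -> {homo C : m n / (m <= n)%N >-> n `<=` m}.
Proof.
move=> C_nested m n /subnK <-; elim: (n - m)%N => // j IH.
by rewrite addSn; exact: subset_trans (C_nested _) IH.
Qed.

Lemma compact_nested_closed_meet (T : topologicalType) (K : set T)
    (C : nat -> set T) :
  compact K -> (forall n, closed (C n)) -> (forall n, C n.+1 `<=` C n) ->
  (forall n, C n `&` K !=set0) -> (\bigcap_n C n) `&` K !=set0.
Proof.
move=> K_compact C_closed C_nested /choice[y yCK].
have [z [Kz z_cluster]] : K `&` cluster (y @ \oo) !=set0.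
  by apply: K_compact; exists 0%N => // n _; exact: (yCK n).2.
exists z; split=> // m _; rewrite ((closure_id (C m)).1 (C_closed m)) => B Bz.
apply: z_cluster Bz; exists m => // n /= mn.
exact: nested_subset C_nested _ _ mn _ (yCK n).1.
Qed.

Lemma convex_set_sphere_meet (R : numFieldType) (E : normedModType R)
    (A : set E) (p w : E) (e : R) :
  convex_set A -> A p -> A w -> 0 <= e < `|w - p| ->
  exists2 y, A y & `|y - p| = e.
Proof.
move=> A_convex Ap Aw /andP[e_ge0 e_lt]; have wp_gt0 := le_lt_trans e_ge0 e_lt.
have t_ge0 : 0 <= e / `|w - p| by rewrite divr_ge0 // ltW.
have t_le1 : e / `|w - p| <= 1 by rewrite ler_pdivrMr // mul1r ltW.
exists ((e / `|w - p|) *: w + (1 - e / `|w - p|) *: p).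
  have := A_convex w p (Itv01 t_ge0 t_le1) (mem_set Aw) (mem_set Ap).
  by rewrite inE.
rewrite scalerBl scale1r addrA addrAC addrK -scalerBr normrZ.
by rewrite ger0_norm ?divfK ?gt_eqF.
Qed.

Lemma nested_closed_convex_shrink (R : realType) (E : normedModType R)
    (C : nat -> set E) (p : E) :
  finite_dimensional E -> (forall n, closed (C n)) ->
  (forall n, convex_set (C n)) -> (forall n, C n.+1 `<=` C n) ->
  (forall n, C n p) -> \bigcap_n C n `<=` [set p] ->
  forall e, 0 < e -> exists N, C N `<=` [set x | `|x - p| <= e].
Proof.
move=> E_fd C_closed C_convex C_nested pC C_meet e e_gt0.
apply: contrapT => C_escape.
have C_meet_sphere n : C n `&` [set x | `|x - p| = e] !=set0.
  have /existsNP[w /not_implyP[Cw /negP]] : ~ C n `<=` [set x | `|x - p| <= e].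
    by move=> CN; apply: C_escape; exists n.
  rewrite -ltNge => e_lt.
  have [|y Cy ye] := convex_set_sphere_meet (C_convex n) (pC n) Cw (e := e).
    by rewrite e_lt ltW.
  by exists y.
have sphere_bounded : bounded_set [set x | `|x - p| = e].
  exists (`|p| + e); split; first exact: num_real.
  move=> M M_gt x /= xpe; apply/ltW/(le_lt_trans _ M_gt).
  by rewrite -[x](subrK p) (le_trans (ler_normD _ _)) // xpe addrC.
have sphere_compact := finite_dimensional_bounded_closed_compact
  E_fd sphere_bounded (@closed_sphere _ _ p e).
have [z [/C_meet -> /=]] :=
  compact_nested_closed_meet sphere_compact C_closed C_nested C_meet_sphere.
by rewrite subrr normr0 => e0; move: e_gt0; rewrite -e0 ltxx.
Qed.

Section Diameter.
Context {R : realType} {E : normedModType R}.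
Local Open Scope ereal_scope.

Lemma diam_ge0 (A : set E) : A !=set0 -> 0 <= diam A.
Proof.
move=> [x Ax]; apply: le_ereal_sup_tmp; exists 0%:E => //.
by exists x => //; exists x => //; rewrite subrr normr0.
Qed.

Lemma le_diam (A B : set E) : A `<=` B -> diam A <= diam B.
Proof.
move=> AB; apply: ereal_sup_le => _ [x Ax [y Ay <-]].
by exists x; [exact: AB | exists y => //; exact: AB].
Qed.

Lemma diam_le (A : set E) (p : E) (e : R) :
  A `<=` [set x | `|x - p| <= e]%R -> diam A <= (e *+ 2)%:E.
Proof.
move=> A_ball; apply: ge_ereal_sup => _ [x Ax [y Ay <-]]; rewrite lee_fin.
rewrite (le_trans (ler_distD p _ _)) // [`|p - y|%R]distrC mulr2n.
by rewrite lerD ?A_ball.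
Qed.

End Diameter.

Lemma ereal_nonincreasing_cvgn0 (R : realType) (u : (\bar R)^nat) :
  nonincreasing_seq u -> (forall n, 0 <= u n)%E ->
  (forall e : R, 0 < e -> exists N, (u N <= e%:E)%E) -> u @ \oo --> 0%E.
Proof.
move=> u_noninc u_ge0 u_small; suff <- : ereal_inf (range u) = 0%E.
  exact: ereal_nonincreasing_cvgn.
apply/eqP; rewrite eq_le; apply/andP; split; last first.
  by apply: le_ereal_inf_tmp => _ [n _ <-].
apply/lee_addgt0Pr => e e_gt0; have [N uN] := u_small e e_gt0.
by rewrite add0e (le_trans _ uN) //; apply: ereal_inf_lbound; exists N.
Qed.

Theorem proposition3p1 (R : realType) (E : completeNormedModType R)
  (C : nat -> set E) (p : E) :
  finite_dimensional E ->
  (forall n, closed (C n)) ->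
  (forall n, @convex_set R E (C n)) ->
  (forall n, C n.+1 `<=` C n) ->
  \bigcap_n C n = [set p] ->
  diam (C n) @[n --> \oo] --> (0 : \bar R)%E.
Proof.
move=> E_fd C_closed C_convex C_nested C_meet.
have pC n : C n p by move: (erefl p : [set p] p); rewrite -C_meet; apply.
have C_sub : \bigcap_n C n `<=` [set p] by rewrite C_meet.
have C_shrink :=
  nested_closed_convex_shrink E_fd C_closed C_convex C_nested pC C_sub.
apply: ereal_nonincreasing_cvgn0.
- by move=> m n mn; apply: le_diam; exact: nested_subset.
- by move=> n; apply: diam_ge0; exists p.
- move=> e e_gt0; have [N CN] := C_shrink (e / 2) (divr_gt0 e_gt0 (ltr0Sn _ 1)).
  by exists N; rewrite [e in e%:E](splitr e) -mulr2n; exact: diam_le CN.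
Qed.
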